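(* Let $n>8$ and let $M_n$ be the maximum of $av_1(T)$ over all trees $T$ with $n$ vertices. Then $M_n=\frac n2+\delta_n$ with $0<\delta_n<\frac12$. Moreover, $\lim_{n\to\infty}\big(M_n-\frac{n+1}{2}\big)=0$, as witnessed by the trees $R_n$ obtained from the star $S_{n-1}$ by attaching a new vertex to one of its leaves, which satisfy $\frac n2<av_1(R_n)<\frac{n+1}2$ and $av_1(R_n)-\frac{n+1}{2}\to 0$.
   Context: For a graph $G=(V,E)$, a set $S\subseteq V$ is a $1$-nearly independent vertex set if the subgraph induced by $S$ has exactly one edge. $\sigma_1(G)$ is the number of such sets, $S_1(G)$ the sum of their sizes, and $av_1(G)=S_1(G)/\sigma_1(G)$. $S_m$ denotes the star on $m$ vertices. *)

From mathcomp Require Import all_boot all_order all_algebra.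
Set Implicit Arguments. Unset Strict Implicit. Unset Printing Implicit Defensive.
Import Order.TTheory GRing.Theory Num.Theory.

(* A simple graph on vertex set 'I_n is given by its edge set E, a set of
   2-element subsets of 'I_n. *)
Definition adj n (E : {set {set 'I_n}}) : rel 'I_n := fun x y => [set x; y] \in E.

Definition is_tree n (E : {set {set 'I_n}}) : bool :=
  [&& [forall e in E, #|e| == 2], #|E| == n.-1 &
      [forall x, forall y, connect (adj E) x y]].

Definition n_ind_edges n (E : {set {set 'I_n}}) (S : {set 'I_n}) : nat :=
  #|[set e in E | e \subset S]|.

Definition sigma1 n (E : {set {set 'I_n}}) : nat :=
  #|[set S : {set 'I_n} | n_ind_edges E S == 1%N]|.

Definition S1 n (E : {set {set 'I_n}}) : nat :=
  \sum_(S : {set 'I_n} | n_ind_edges E S == 1%N) #|S|.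

Definition av1 n (E : {set {set 'I_n}}) : rat := (S1 E)%:R / (sigma1 E)%:R.

(* M_n: maximum of av_1 over all trees on n vertices (av_1 >= 0 so 0 is a
   harmless neutral element; trees exist for n >= 1). *)
Definition Mn (n : nat) : rat :=
  \big[Num.max/0%R]_(E : {set {set 'I_n}} | is_tree E) av1 E.

(* R_n: star S_{n-1} with centre 0 and leaves 1..n-2, plus vertex n-1
   attached to the leaf 1. *)
Definition Rn (n : nat) : {set {set 'I_n}} :=
  [set e : {set 'I_n} | [exists i : 'I_n, [exists j : 'I_n,
     (e == [set i; j]) &&
     (((nat_of_ord i == 0%N) && (1 <= j <= n - 2)%N)
      || ((nat_of_ord i == 1%N) && (nat_of_ord j == n - 1)%N))]]].

(* A vertex [w] is free for a 1-nearly independent set [S] when both [S :\ w]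
   and [w |: S] are 1-nearly independent.  The non-free vertices of [S] lie in
   the unique edge [e] of [S], and free vertices avoid the closed neighbourhood
   N[e], which in a connected graph on [n >= 4] vertices has at least 3
   vertices, and at least 4 for a suitable edge.  Toggling [w] is an involution
   on the sets for which [w] is free, so a free vertex belongs to exactly half
   of them; double counting gives [2 S_1 + 1 <= (n + 1) sigma_1], i.e.
   [av_1 < (n + 1) / 2] for every tree.
   In [R_n] the sets containing the pendant edge but not the centre number at
   least [2^(n-3)] and have average size at least [(n + 1) / 2], while the at
   most [2 (n - 2)] sets containing the centre change the average by
   [O(n^2 / 2^n)]; hence [n / 2 < av_1(R_n)] and [av_1(R_n) -> (n + 1) / 2]. *)

From mathcomp Require Import all_boot all_order all_algebra zify lra ring.
Set Implicit Arguments. Unset Strict Implicit. Unset Printing Implicit Defensive.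
Import Order.TTheory GRing.Theory Num.Theory.

Section Toggle.
Variable T : finType.
Implicit Types (S e : {set T}) (w : T).

Definition toggle w S := if w \in S then S :\ w else w |: S.

Lemma toggleK w : involutive (toggle w).
Proof.
move=> S; rewrite /toggle; case: (boolP (w \in S)) => wS.
  by rewrite in_setD1 eqxx /= setD1K.
by rewrite setU11 setU1K.
Qed.

Lemma mem_toggle w S : (w \in toggle w S) = (w \notin S).
Proof. by rewrite /toggle; case: ifP => wS; rewrite !inE eqxx. Qed.

Lemma mem_toggle_neq x w S : x != w -> (x \in toggle w S) = (x \in S).
Proof. by move=> xw; rewrite /toggle; case: ifP => _; rewrite !inE (negbTE xw). Qed.

Lemma toggleD1 w S : toggle w S :\ w = S :\ w.
Proof. by apply/setP=> x; rewrite !inE; case: eqP => // /eqP/mem_toggle_neq->. Qed.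

Lemma toggleU1 w S : w |: toggle w S = w |: S.
Proof. by apply/setP=> x; rewrite !inE; case: eqP => // /eqP/mem_toggle_neq->. Qed.

Lemma sub_toggle w e S : w \notin e -> (e \subset toggle w S) = (e \subset S).
Proof.
move=> we; apply/subsetP/subsetP => eS x xe; have xw : x != w by apply: contraNneq we => <-.
  by rewrite -(mem_toggle_neq S xw) eS.
by rewrite mem_toggle_neq // eS.
Qed.

(* Toggling [w] pairs the members of [P] containing [w] with those avoiding it. *)
Lemma card_toggle_closed (P : {set {set T}}) w :
  (forall S, (toggle w S \in P) = (S \in P)) ->
  (#|[set S in P | w \in S]|).*2 = #|P|.
Proof.
move=> Ptog; set P1 := [set S in P | w \in S].
have P1toggle : toggle w @: P1 = P :\: P1.
  rewrite (can2_imset_pre _ (toggleK w) (toggleK w)).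
  by apply/setP=> S; rewrite !inE Ptog mem_toggle; case: (S \in P); case: (w \in S).
rewrite -(cardsID P1 P) -addnn (setIidPr _) ?subsetIl //.
  by rewrite -P1toggle card_imset //; apply: can_inj (toggleK w).
by apply/subsetP => S; rewrite inE => /andP[].
Qed.

End Toggle.

Lemma sum_card_swap (I J : finType) (Q : I -> J -> bool) :
  \sum_j #|[set i | Q i j]| = \sum_i #|[set j | Q i j]|.
Proof.
have card_as_sum (K : finType) (R : pred K) : #|[set k | R k]| = \sum_k R k.
  by rewrite -sum1_card big_mkcond /=; apply: eq_bigr => k _; rewrite inE; case: (R k).
under eq_bigr do rewrite card_as_sum.
by rewrite exchange_big; apply: eq_bigr => i _; rewrite card_as_sum.
Qed.

Section NearlyIndependent.
Variables (n : nat) (E : {set {set 'I_n}}).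
Implicit Types (S e : {set 'I_n}).

Definition nearly_indep := [set S | n_ind_edges E S == 1%N].

Lemma nearly_indepP S :
  reflect (exists e, [/\ e \in E, e \subset S & forall e', e' \in E -> e' \subset S -> e' = e])
          (S \in nearly_indep).
Proof.
rewrite inE /n_ind_edges; apply: (iffP cards1P) => [[e He] | [e [eE eS Hu]]].
  have /[!inE] /andP[eE eS] : e \in [set e in E | e \subset S] by rewrite He set11.
  exists e; split => // e' e'E e'S; apply/set1P.
  by rewrite -He inE e'E.
exists e; apply/setP => e'; rewrite !inE; apply/andP/eqP => [[]|->]; last by [].
exact: Hu.
Qed.

Lemma two_edges_not_nearly_indep S e1 e2 :
  e1 \in E -> e2 \in E -> e1 \subset S -> e2 \subset S -> e1 != e2 -> S \notin nearly_indep.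
Proof.
move=> e1E e2E e1S e2S; apply: contraNN => /nearly_indepP [e [_ _ Hu]].
by rewrite (Hu e1) // (Hu e2).
Qed.

Lemma S1E : S1 E = \sum_(S in nearly_indep) #|S|.
Proof. by apply: eq_bigl => S; rewrite inE. Qed.

End NearlyIndependent.

Lemma sum_card_mem (T : finType) (P : {set {set T}}) :
  \sum_(S in P) #|S| = \sum_w #|[set S in P | w \in S]|.
Proof.
rewrite (sum_card_swap (fun S w => (S \in P) && (w \in S))) big_mkcond /=.
apply: eq_bigr => S _; case: (S \in P) => /=; apply/esym.
  by apply: eq_card => w; rewrite inE.
by apply/eqP; rewrite cards_eq0; apply/eqP/setP => w; rewrite !inE.
Qed.

Lemma adj_sym n (E : {set {set 'I_n}}) : symmetric (adj E).
Proof. by move=> x y; rewrite /adj setUC. Qed.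

Section ConnectedGraph.
Variables (n : nat) (E : {set {set 'I_n}}).
Hypothesis card_edge : forall e, e \in E -> #|e| = 2.
Hypothesis connected : forall x y, connect (adj E) x y.
Implicit Types (S C e : {set 'I_n}) (w : 'I_n).

Lemma exists_edge_out C a : a \in C -> (#|C| < n)%N ->
  exists c y, [/\ c \in C, y \notin C & adj E c y].
Proof.
move=> aC Cn.
have [/existsP [c /existsP [y /and3P [*]]] | no_out] :=
  boolP [exists c, exists y, [&& c \in C, y \notin C & adj E c y]].
  by exists c, y.
have Cclosed : closed (adj E) (mem C).
  apply: intro_closed; first exact: sym_connect_sym (@adj_sym _ E).
  move=> x y xy xC; apply: contraNT no_out => yC.
  by apply/existsP; exists x; apply/existsP; exists y; rewrite xC yC.
have CT : C = setT by apply/setP => z; rewrite inE -(closed_connect Cclosed (connected a z)).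
by rewrite CT cardsT card_ord ltnn in Cn.
Qed.

Definition closed_nbhd e := [set y | (y \in e) || [exists z in e, adj E z y]].

Lemma closed_nbhd_edge e y z : z \in e -> adj E z y -> y \in closed_nbhd e.
Proof. by move=> ze zy; rewrite inE; apply/orP; right; apply/existsP; exists z; rewrite ze. Qed.

Lemma sub_closed_nbhd e : e \subset closed_nbhd e.
Proof. by apply/subsetP => y ye; rewrite inE ye. Qed.

Lemma card_closed_nbhd e : (2 < n)%N -> e \in E -> (3 <= #|closed_nbhd e|)%N.
Proof.
move=> n_gt2 eE; have e2 := card_edge eE.
have [u ue] : exists u, u \in e by apply/set0Pn; rewrite -card_gt0 e2.
have [c [y [ce ye cy]]] : exists c y, [/\ c \in e, y \notin e & adj E c y].
  by apply: exists_edge_out ue _; rewrite e2.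
have : y |: e \subset closed_nbhd e.
  by rewrite subUset sub1set sub_closed_nbhd (closed_nbhd_edge ce cy).
by move/subset_leq_card; rewrite cardsU1 ye e2.
Qed.

Lemma edge_adj e x z : e \in E -> z \in e -> x \in e -> x != z -> adj E z x.
Proof.
move=> eE ze xe xz; rewrite /adj; suff -> : [set z; x] = e by [].
apply/eqP; rewrite eqEcard (card_edge eE) cards2 eq_sym xz andbT.
by apply/subsetP => y /set2P[] ->.
Qed.

Lemma exists_card_closed_nbhd4 : (3 < n)%N -> exists2 e0, e0 \in E & (4 <= #|closed_nbhd e0|)%N.
Proof.
move=> n_gt3; pose x0 : 'I_n := Ordinal (ltn_trans (isT : 0 < 3)%N n_gt3).
have x0n : (#|[set x0]| < n)%N by rewrite cards1 (ltn_trans _ n_gt3).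
have [c [y [_ _ cy]]] := exists_edge_out (set11 x0) x0n.
have {c y cy}[e eE] : exists e, e \in E by exists [set c; y].
have [H4 | H3] := leqP 4 #|closed_nbhd e|; first by exists e.
have [u ue] : exists u, u \in e by apply/set0Pn; rewrite -card_gt0 card_edge.
have uN : u \in closed_nbhd e by rewrite (subsetP (sub_closed_nbhd e)).
have [c [y [cN yN cy]]] := exists_edge_out uN (leq_trans H3 n_gt3).
have ce : c \notin e by apply: contraNN yN => ce; apply: closed_nbhd_edge cy.
have [z ze zc] : exists2 z, z \in e & adj E z c.
  by move: cN; rewrite inE (negbTE ce) => /existsP [z /andP [??]]; exists z.
exists [set z; c] => //.
have : y |: (c |: e) \subset closed_nbhd [set z; c].
  rewrite !subUset !sub1set (closed_nbhd_edge _ cy) ?set22 //=.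
  rewrite (subsetP (sub_closed_nbhd _)) ?set22 //=.
  apply/subsetP => x xe; case: (x =P z) => [-> | /eqP xz].
    by rewrite (subsetP (sub_closed_nbhd _)) ?set21.
  exact: (closed_nbhd_edge (set21 z c) (edge_adj eE ze xe xz)).
move/subset_leq_card; rewrite !cardsU1 card_edge // ce.
suff -> : y \notin c |: e by [].
rewrite !inE negb_or; apply/andP; split.
  by apply: contraNneq yN => ->.
by apply: contraNN yN; apply: (subsetP (sub_closed_nbhd e)).
Qed.

Definition free w S :=
  (S :\ w \in nearly_indep E) && (w |: S \in nearly_indep E).

Lemma free_toggle w S : free w (toggle w S) = free w S.
Proof. by rewrite /free toggleD1 toggleU1. Qed.

Lemma free_nearly_indep w S : free w S -> S \in nearly_indep E.
Proof.
case/andP => SD1 SU1; case: (boolP (w \in S)) => wS.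
  by have /setUidPr <- : [set w] \subset S by rewrite sub1set.
by have /setDidPl <- : [disjoint S & [set w]] by rewrite disjoint_sym disjoints1.
Qed.

Lemma card_le_free S : S \in nearly_indep E -> (#|S| <= 2 + #|[set w in S | free w S]|)%N.
Proof.
move=> /[dup] SF /nearly_indepP [e [eE eS Hu]].
have nonfree_sub : [set w in S | ~~ free w S] \subset e.
  apply/subsetP => w; rewrite inE => /andP [wS]; apply: contraNT => we.
  rewrite /free; have /setUidPr -> : [set w] \subset S by rewrite sub1set.
  rewrite SF andbT; apply/nearly_indepP; exists e; split => //.
    by rewrite subsetD1 eS.
  by move=> e' e'E /subset_trans /(_ (subD1set S w)); apply: Hu.
rewrite -(cardsID [set w | free w S] S) addnC leq_add //.
  rewrite -(card_edge eE) (leq_trans _ (subset_leq_card nonfree_sub)) //.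
  by rewrite subset_leq_card //; apply/subsetP => w; rewrite !inE andbC.
by rewrite subset_leq_card //; apply/subsetP => w; rewrite !inE andbC.
Qed.

Lemma free_notin_closed_nbhd S e w : S \in nearly_indep E -> e \in E -> e \subset S ->
  free w S -> w \notin closed_nbhd e.
Proof.
move=> /nearly_indepP [e1 [_ _ Hu1]] eE eS /andP [SD1 SU1].
have Hu e' : e' \in E -> e' \subset S -> e' = e by move=> ??; rewrite (Hu1 e') // (Hu1 e).
have we : w \notin e.
  move: SD1 => /nearly_indepP [e' [e'E]]; rewrite subsetD1 => /andP [e'S we'] _.
  by rewrite -(Hu e').
rewrite inE (negbTE we) /=; apply/existsP => -[z /andP [ze zw]].
apply: negP SU1; apply: (two_edges_not_nearly_indep eE zw).
- by apply: subset_trans eS (subsetUr _ _).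
- by apply/subsetP => x /set2P[] ->; rewrite !inE ?eqxx // (subsetP eS) ?orbT.
- by apply: contraNneq we => ->; rewrite set22.
Qed.

Lemma sum_free_mem :
  (\sum_(S in nearly_indep E) #|[set w in S | free w S]|).*2 =
  \sum_(S in nearly_indep E) #|[set w | free w S]|.
Proof.
have sum_nearly_indep (Q : 'I_n -> {set 'I_n} -> bool) :
    (forall w S, Q w S -> free w S) ->
    \sum_(S in nearly_indep E) #|[set w | Q w S]| = \sum_S #|[set w | Q w S]|.
  move=> Qfree; rewrite [RHS](bigID (mem (nearly_indep E))) /= [X in _ = _ + X]big1 ?addn0 //.
  move=> S SF; apply/eqP; rewrite cards_eq0; apply/eqP/setP => w; rewrite !inE.
  by apply: contraNF SF => /Qfree /free_nearly_indep.
rewrite !sum_nearly_indep; [| by move=> ?? /andP[] | by []].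
rewrite sum_card_swap [RHS]sum_card_swap -mul2n big_distrr /=; apply: eq_bigr => w _.
rewrite mul2n -(@card_toggle_closed _ [set S | free w S] w); last first.
  by move=> S; rewrite !inE free_toggle.
by congr _.*2; apply: eq_card => S; rewrite !inE andbC.
Qed.

Lemma connected_S1_bound : (3 < n)%N -> ((S1 E).*2 + 1 <= n.+1 * sigma1 E)%N.
Proof.
move=> n_gt3; rewrite S1E /sigma1 -/(nearly_indep E); set F := nearly_indep E.
have free_le S e : S \in F -> e \in E -> e \subset S ->
    (#|[set w | free w S]| + #|closed_nbhd e| <= n)%N.
  move=> SF eE eS; rewrite -[X in (_ <= X)%N]card_ord -(cardsC (closed_nbhd e)) addnC.
  rewrite leq_add2l subset_leq_card //.
  by apply/subsetP => w; rewrite inE in_setC; apply: free_notin_closed_nbhd SF eE eS.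
have [e0 e0E e0N] := exists_card_closed_nbhd4 n_gt3.
have e0F : e0 \in F.
  apply/nearly_indepP; exists e0; split => // e' e'E e'S; apply/eqP.
  by rewrite eqEcard e'S !card_edge.
have sum_free : (\sum_(S in F) #|[set w | free w S]| + 1 <= (n - 3) * #|F|)%N.
  rewrite -sum1_card big_distrr /= (bigD1 e0) //= [X in (_ <= X)%N](bigD1 e0) //= muln1.
  rewrite addnAC leq_add //.
    rewrite -(leq_add2r 3) subnK ?(ltnW n_gt3) // -addnA.
    by apply: leq_trans (free_le _ _ e0F e0E (subxx e0)); rewrite leq_add2l.
  apply: leq_sum => S /andP [SF _]; rewrite ?muln1.
  have /nearly_indepP [e [eE eS _]] := SF.
  rewrite -(leq_add2r 3) subnK ?(ltnW n_gt3) //.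
  apply: leq_trans (free_le _ _ SF eE eS).
  by rewrite leq_add2l card_closed_nbhd // ltnW.
have sum_card : (\sum_(S in F) #|S| <= 2 * #|F| + \sum_(S in F) #|[set w in S | free w S]|)%N.
  rewrite -sum1_card big_distrr /= -big_split /= leq_sum // => S SF.
  by rewrite muln1 card_le_free.
have -> : (n.+1 * #|F| = 4 * #|F| + (n - 3) * #|F|)%N by rewrite -mulnDl; congr (_ * _); lia.
move: sum_card sum_free; rewrite -sum_free_mem -/F; lia.
Qed.

End ConnectedGraph.

Section Tree.
Variables (n : nat) (E : {set {set 'I_n}}).
Hypothesis E_tree : is_tree E.

Lemma tree_card_edge e : e \in E -> #|e| = 2.
Proof. by case/and3P: E_tree => /forall_inP E2 _ _ /E2 /eqP. Qed.

Lemma tree_connected x y : connect (adj E) x y.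
Proof. by case/and3P: E_tree => _ _ /forallP /(_ x) /forallP. Qed.

End Tree.

Lemma quadratic_lt_exp2 m : (7 < m)%N -> (2 * (m - 4) * (m - 1) + 1 < 2 ^ (m - 2))%N.
Proof.
move=> m_gt7; have [k ->] : exists k, m = (k + 8)%N by exists (m - 8)%N; lia.
have -> : (k + 8 - 2 = k + 6)%N by lia.
elim: k => [|k IH] //; rewrite addSn expnS.
move: IH; move: (2 ^ (k + 6))%N => p; lia.
Qed.

Lemma cube_le_exp2 m : (13 < m)%N -> (m ^ 3 <= 2 ^ (m - 2))%N.
Proof.
move=> m_gt13; have [k ->] : exists k, m = (k + 14)%N by exists (m - 14)%N; lia.
have -> : (k + 14 - 2 = k + 12)%N by lia.
elim: k => [|k IH] //; rewrite addSn [2 ^ _.+1]expnS.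
have grow : (2 * (k + 14) ^ 3 = (k.+1 + 14) ^ 3 + (k ^ 3 + 39 * k ^ 2 + 501 * k + 2113))%N.
  by ring.
by rewrite (leq_trans (leq_addr (k ^ 3 + 39 * k ^ 2 + 501 * k + 2113) _)) // -grow leq_mul2l IH.
Qed.

Section StarWithPendant.
Variable m : nat.
Hypothesis m_gt7 : (7 < m)%N.
Local Notation n := m.+1.
Local Notation E := (Rn m.+1).
Local Notation F := (nearly_indep (Rn m.+1)).
Implicit Types (S e : {set 'I_n}).

Definition centre : 'I_n := ord0.
Definition tip : 'I_n := ord_max.
Definition hub : 'I_n := inord 1.
Definition leaves : {set 'I_n} := ~: [set centre; tip].

Lemma val_hub : nat_of_ord hub = 1%N.
Proof. by rewrite /hub inordK // ltnS (leq_trans _ m_gt7). Qed.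

Lemma centre_neq_tip : centre != tip.
Proof. by apply/eqP => /(congr1 (@nat_of_ord _)) /= H; move: m_gt7; rewrite -H. Qed.
Lemma centre_neq_hub : centre != hub.
Proof. by apply/eqP => /(congr1 (@nat_of_ord _)); rewrite val_hub. Qed.
Lemma hub_neq_tip : hub != tip.
Proof.
by apply/eqP => /(congr1 (@nat_of_ord _)); rewrite val_hub /= => H; move: m_gt7; rewrite -H.
Qed.
Lemma mem_leaves x : (x \in leaves) = (x != centre) && (x != tip).
Proof. by rewrite !inE negb_or. Qed.

Lemma hub_leaf : hub \in leaves.
Proof. by rewrite mem_leaves eq_sym centre_neq_hub hub_neq_tip. Qed.

Lemma mem_Rn e : e \in E <-> (exists2 j, j \in leaves & e = [set centre; j]) \/ e = [set hub; tip].
Proof.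
rewrite /Rn inE; split.
  case/existsP => i /existsP [j /andP [/eqP -> /orP [/andP [i0 j12] | /andP [i1 jL]]]].
    left; exists j; last by congr [set _; _]; apply: ord_inj; rewrite /= (eqP i0).
    rewrite !inE negb_or; case/andP: j12 => j1 j2; apply/andP; split.
      by apply/eqP => /(congr1 (@nat_of_ord _)) /= H; rewrite H in j1.
    apply/eqP => /(congr1 (@nat_of_ord _)) /= H; rewrite H in j2; move: j2; rewrite subn2 /=.
    by case: m m_gt7 => [|k] //; rewrite ltnn.
  right; congr [set _; _]; apply: ord_inj; rewrite /=; rewrite ?val_hub ?(eqP i1) //.
  by rewrite (eqP jL) subn1.
case=> [[j jL ->] | ->].
  apply/existsP; exists centre; apply/existsP; exists j; rewrite eqxx /=.
  move: jL; rewrite !inE negb_or => /andP [j0 jL].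
  apply/orP; left; apply/andP; split.
    by rewrite lt0n; apply: contra j0 => /eqP H; apply/eqP/ord_inj.
  have jm : nat_of_ord j != m by apply: contra jL => /eqP H; apply/eqP/ord_inj.
  have := ltn_ord j; move: jm; clear; lia.
apply/existsP; exists hub; apply/existsP; exists tip; rewrite eqxx /= val_hub /=.
by rewrite subn1.
Qed.

Lemma Rn_edge_centre e : e \in E -> (centre \in e) \/ e = [set hub; tip].
Proof. by move/mem_Rn; case=> [[j _ ->] | ->]; [left; rewrite !inE eqxx | right]. Qed.

Lemma Rn_edge_tip e : e \in E -> tip \in e -> e = [set hub; tip].
Proof.
move/mem_Rn; case=> [[j jL ->] | -> //].
rewrite !inE => /orP [/eqP H | /eqP H]; first by move: centre_neq_tip; rewrite H eqxx.
by move: jL; rewrite -H !inE eqxx orbT.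
Qed.

Lemma spoke_in_Rn j : j \in leaves -> [set centre; j] \in E.
Proof. by move=> jL; apply (proj2 (mem_Rn _)); left; exists j. Qed.
Lemma pendant_in_Rn : [set hub; tip] \in E.
Proof. by apply (proj2 (mem_Rn _)); right. Qed.

Lemma Rn_card_edge e : e \in E -> #|e| = 2.
Proof.
move/mem_Rn; case=> [[j jL ->] | ->]; rewrite cards2.
  by move: jL; rewrite !inE negb_or => /andP [/negbTE]; rewrite eq_sym => ->.
by rewrite hub_neq_tip.
Qed.

Lemma card_leaves : #|leaves| = m.-1.
Proof.
have := cardsC [set centre; tip]; rewrite cards2 centre_neq_tip card_ord -/leaves.
by move=> H; apply/eqP; rewrite -(eqn_add2l 2) H add2n; case: m m_gt7.
Qed.

Lemma Rn_eq : E = [set hub; tip] |: ((fun j => [set centre; j]) @: leaves).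
Proof.
apply/setP => e; apply/idP/idP.
  move/mem_Rn; case=> [[j jL ->] | ->]; last by apply/setU1P; left.
  by apply/setU1P; right; apply: imset_f.
case/setU1P => [-> | /imsetP [j jL ->]]; [exact: pendant_in_Rn | exact: spoke_in_Rn].
Qed.

Lemma card_Rn : #|E| = m.
Proof.
rewrite Rn_eq cardsU1 card_in_imset ?card_leaves.
  have -> : [set hub; tip] \notin [set [set centre; j] | j in leaves].
    apply/imsetP => [[j _ H]]; have : centre \in [set hub; tip] by rewrite H !inE eqxx.
    by rewrite !inE (negbTE centre_neq_hub) (negbTE centre_neq_tip).
  by case: m m_gt7.
move=> j k jL kL H; have : j \in [set centre; k] by rewrite -H !inE eqxx orbT.
rewrite !inE => /orP [/eqP jo | /eqP //]; by move: jL; rewrite jo !inE eqxx.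
Qed.

Lemma Rn_tree : is_tree E.
Proof.
apply/and3P; split.
- by apply/forall_inP => e /Rn_card_edge ->.
- by rewrite card_Rn.
have to0 : forall x, connect (adj E) x centre.
  move=> x; case: (boolP (x \in leaves)) => xL.
    by apply: connect1; rewrite /adj setUC; apply: spoke_in_Rn.
  move: xL; rewrite !inE negbK => /orP [/eqP -> // | /eqP ->].
  have h1 : adj E tip hub by rewrite /adj setUC; exact: pendant_in_Rn.
  have h2 : adj E hub centre by rewrite /adj setUC; apply: spoke_in_Rn; exact: hub_leaf.
  exact: connect_trans (connect1 h1) (connect1 h2).
apply/forallP => x; apply/forallP => y.
apply: connect_trans (to0 x) _; rewrite (sym_connect_sym (@adj_sym _ E)); exact: to0.
Qed.

Lemma tip_notin_edge e S : e \in E -> e \subset S -> hub \notin S -> tip \notin e.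
Proof.
move=> eE eS; apply: contraNN => /(Rn_edge_tip eE) ee.
by rewrite (subsetP eS) // ee set21.
Qed.

Definition pendant_sets : {set {set 'I_n}} :=
  [set S : {set 'I_n} | [&& hub \in S, tip \in S & centre \notin S]].
Definition centre_sets : {set {set 'I_n}} := [set S in F | centre \in S].

Lemma pendant_setsE : pendant_sets = [set S in F | centre \notin S].
Proof.
apply/setP => S; rewrite inE [RHS]inE; apply/and3P/andP => [[S1 SL S0] | [SF S0]].
  split=> //; apply/nearly_indepP; exists [set hub; tip]; split => [||e'].
  - exact: pendant_in_Rn.
  - by apply/subsetP => x /set2P[] ->.
  by move=> /Rn_edge_centre [e0 /subsetP /(_ _ e0) | //]; rewrite (negbTE S0).
have /nearly_indepP [e [eE eS _]] := SF.
case: (Rn_edge_centre eE) => [e0 | ee]; first by rewrite (subsetP eS _ e0) in S0.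
by split=> //; apply: (subsetP eS); rewrite ee !inE eqxx ?orbT.
Qed.

Lemma sigma1_Rn_split : sigma1 E = #|centre_sets| + #|pendant_sets|.
Proof.
rewrite /sigma1 -/F pendant_setsE -(cardsID [set S : {set 'I_n} | centre \in S]); congr (_ + _).
  by apply: eq_card => S; rewrite !inE.
by apply: eq_card => S; rewrite !inE andbC.
Qed.

Lemma S1_Rn_split : S1 E = \sum_(S in centre_sets) #|S| + \sum_(S in pendant_sets) #|S|.
Proof.
rewrite S1E (bigID (fun S => centre \in S)) /= pendant_setsE.
by congr (_ + _); apply: eq_bigl => S; rewrite !inE.
Qed.

Definition others : {set 'I_n} := ~: (centre |: [set hub; tip]).

Lemma card_others : #|others| = (m - 2)%N.
Proof.
have := cardsC (centre |: [set hub; tip]).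
rewrite cardsU1 cards2 hub_neq_tip !inE (negbTE centre_neq_hub) (negbTE centre_neq_tip) /=.
by rewrite card_ord -/others; move: #|others| => k; lia.
Qed.

Lemma mem_others x : x \in others = [&& x != centre, x != hub & x != tip].
Proof. by rewrite !inE !negb_or. Qed.

Lemma card_pendant_sets : (2 ^ (m - 2) <= #|pendant_sets|)%N.
Proof.
pose f (T : {set 'I_n}) := T :|: [set hub; tip].
have fK (T : {set 'I_n}) : T \subset others -> f T :&: others = T.
  move=> Tothers; apply/setP => x; rewrite !inE.
  case xT: (x \in T) => /=; first by have := subsetP Tothers x xT; rewrite !inE.
  by case: (x == hub); case: (x == tip); rewrite ?orbT /= ?andbF ?andbT.
rewrite -card_others -card_powerset -(card_in_imset (f := f)); last first.
  by move=> T1 T2; rewrite !powersetE => T1o T2o eqf; rewrite -(fK _ T1o) -(fK _ T2o) eqf.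
apply: subset_leq_card; apply/subsetP => S /imsetP [T]; rewrite powersetE => Tothers ->.
rewrite inE !inE !eqxx ?orbT /= (negbTE centre_neq_hub) (negbTE centre_neq_tip) !orbF.
by apply/negP => /(subsetP Tothers); rewrite !inE eqxx.
Qed.

(* Each vertex outside [centre], [hub], [tip] lies in exactly half of the pendant sets. *)
Lemma sum_card_pendant_sets :
  ((m + 2) * #|pendant_sets| <= 2 * \sum_(S in pendant_sets) #|S|)%N.
Proof.
rewrite sum_card_mem big_distrr /= (bigID (mem others)) /=.
have others_half : \sum_(w in others) 2 * #|[set S in pendant_sets | w \in S]| =
    (m - 2) * #|pendant_sets|.
  rewrite -card_others -sum_nat_const; apply: eq_bigr => w.
  rewrite mul2n mem_others => /and3P [w0 w1 wL]; apply: card_toggle_closed => S.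
  by rewrite !inE !mem_toggle_neq // eq_sym.
have pendant_all w : w \in [set hub; tip] ->
    #|[set S in pendant_sets | w \in S]| = #|pendant_sets|.
  move=> wK; apply: eq_card => S; rewrite !inE; apply/andP/idP => [[] // | SA]; split => //.
  by move: SA wK; rewrite !inE => /and3P [? ? _] /orP [] /eqP ->.
rewrite others_half (bigD1 hub) /=; last by rewrite mem_others eqxx andbF.
rewrite (bigD1 tip) /=; last by rewrite mem_others eqxx !andbF /= eq_sym hub_neq_tip.
rewrite !pendant_all ?inE ?eqxx ?orbT //.
have -> : ((m + 2) * #|pendant_sets| =
    (m - 2) * #|pendant_sets| + (2 * #|pendant_sets| + 2 * #|pendant_sets|))%N.
  by rewrite -!mulnDl; congr (_ * _); lia.
by rewrite leq_add2l addnA leq_addr.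
Qed.

Lemma centre_set_shape S : S \in F -> centre \in S ->
  exists2 j, j \in leaves & (S = [set centre; j] \/ S = tip |: [set centre; j]).
Proof.
move=> /nearly_indepP [e [eE eS Hu]] S0.
have [j jL jS] : exists2 j, j \in leaves & j \in S.
  move/mem_Rn: eE => [[j jL ej] | ej].
    by exists j => //; apply: (subsetP eS); rewrite ej !inE eqxx orbT.
  by exists hub; [exact: hub_leaf | apply: (subsetP eS); rewrite ej !inE eqxx].
have spokeS k : k \in S -> [set centre; k] \subset S by move=> kS; apply/subsetP => x /set2P[] ->.
have ej := Hu _ (spoke_in_Rn jL) (spokeS _ jS).
have Ssub : S \subset tip |: [set centre; j].
  apply/subsetP => x xS; rewrite !inE; case: (boolP (x \in leaves)) => xL.
    have /setP /(_ x) := Hu _ (spoke_in_Rn xL) (spokeS _ xS).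
    by rewrite -ej !inE eqxx orbT => /esym ->; rewrite orbT.
  by move: xL; rewrite mem_leaves negb_and !negbK => /orP [] ->; rewrite ?orbT.
exists j => //; case: (boolP (tip \in S)) => SL; [right | left]; apply/eqP; rewrite eqEsubset.
  by rewrite Ssub subUset sub1set SL spokeS.
rewrite spokeS // andbT; apply/subsetP => x xS; move: (subsetP Ssub x xS); rewrite !inE.
by case/orP => // /eqP xL; move: xS; rewrite xL (negbTE SL).
Qed.

Lemma card_centre_sets : (#|centre_sets| <= 2 * (m - 1))%N.
Proof.
have : centre_sets \subset
    [set [set centre; j] | j in leaves] :|: [set tip |: [set centre; j] | j in leaves].
  apply/subsetP => S; rewrite inE in_setU => /andP [SF S0].
  have [j jL [-> | ->]] := centre_set_shape SF S0; apply/orP; [left | right].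
    by apply: imset_f.
  by apply: imset_f.
move/subset_leq_card/leq_trans; apply; rewrite cardsU.
apply: leq_trans (leq_subr _ _) _; rewrite mul2n -addnn.
have -> : (m - 1 = #|leaves|)%N by rewrite card_leaves subn1.
by apply: leq_add; apply: leq_imset_card.
Qed.

Lemma card_centre_set S : S \in F -> (2 + ((tip \in S) && (hub \notin S)) <= #|S|)%N.
Proof.
move=> /nearly_indepP [e [eE eS _]]; have e2 := Rn_card_edge eE.
case: (boolP ((tip \in S) && (hub \notin S))) => [/andP [SL S1] | _].
  have eL := tip_notin_edge eE eS S1.
  have : tip |: e \subset S by rewrite subUset sub1set SL eS.
  by move/subset_leq_card; rewrite cardsU1 eL e2.
by rewrite addn0 -e2 subset_leq_card.
Qed.

Lemma toggle_tip_nearly_indep S : hub \notin S -> S \in F -> toggle tip S \in F.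
Proof.
move=> S1 /nearly_indepP [e [eE eS Hu]]; apply/nearly_indepP; exists e.
have S1' : hub \notin toggle tip S by rewrite mem_toggle_neq ?hub_neq_tip.
split => //; first by rewrite sub_toggle ?(tip_notin_edge eE eS S1).
move=> e' e'E e'S; apply: Hu => //.
by rewrite -(sub_toggle S (tip_notin_edge e'E e'S S1')).
Qed.

Definition hubless_centre_sets : {set {set 'I_n}} := [set S in centre_sets | hub \notin S].

Lemma toggle_tip_hubless S :
  (toggle tip S \in hubless_centre_sets) = (S \in hubless_centre_sets).
Proof.
rewrite !inE !mem_toggle_neq ?hub_neq_tip ?centre_neq_tip //.
case: (boolP (hub \in S)) => //= S1; rewrite ?andbF ?andbT //.
case: (centre \in S); rewrite ?andbF ?andbT //.
have := @toggle_tip_nearly_indep (toggle tip S).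
rewrite toggleK mem_toggle_neq ?hub_neq_tip // !inE => /(_ S1) untoggle.
have := toggle_tip_nearly_indep S1; rewrite !inE => toggle.
by apply/idP/idP.
Qed.

(* Besides the hubless ones, the only centre set is [{centre, hub}]. *)
Lemma card_centre_sets_hubless : (#|centre_sets| <= #|hubless_centre_sets| + 1)%N.
Proof.
rewrite -(cardsID [set S : {set 'I_n} | hub \in S] centre_sets) addnC; apply: leq_add.
  by apply: eq_leq; apply: eq_card => S; rewrite !inE andbC.
rewrite -(cards1 [set centre; hub]) subset_leq_card //.
apply/subsetP => S; rewrite in_setI [S \in centre_sets]inE => /andP [/andP [SF S0]].
rewrite !inE => S1.
have [j jL [eS | eS]] := centre_set_shape SF S0.
  move: S1; rewrite eS !inE eq_sym (negbTE centre_neq_hub) /= => /eqP jo.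
  by rewrite -jo.
move: S1; rewrite eS !inE (negbTE hub_neq_tip) eq_sym (negbTE centre_neq_hub) /= => /eqP jo.
have Sedge e : e \subset centre |: [set hub; tip] -> e \subset S.
  by move=> eS'; rewrite eS -jo; apply: subset_trans eS' _; apply/subsetP => x; rewrite !inE;
    case/or3P => ->; rewrite ?orbT.
have Sedges : S \notin F.
  apply: (two_edges_not_nearly_indep (spoke_in_Rn hub_leaf) pendant_in_Rn).
  - by apply: Sedge; apply/subsetP => x /set2P[] ->; rewrite !inE eqxx ?orbT.
  - by apply: Sedge; apply/subsetP => x /set2P[] ->; rewrite !inE eqxx ?orbT.
  - apply/negP => /eqP H; have : centre \in [set hub; tip] by rewrite -H set21.
    by rewrite !inE (negbTE centre_neq_hub) (negbTE centre_neq_tip).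
by rewrite SF in Sedges.
Qed.

Lemma sum_card_centre_sets :
  (5 * #|centre_sets| <= 2 * \sum_(S in centre_sets) #|S| + 1)%N.
Proof.
set B' := hubless_centre_sets.
have sum_ge : (2 * #|centre_sets| + #|[set S in B' | tip \in S]| <=
    \sum_(S in centre_sets) #|S|)%N.
  apply: leq_trans (_ : \sum_(S in centre_sets) (2 + ((tip \in S) && (hub \notin S))) <= _)%N.
    rewrite big_split /= -sum1_card big_distrr /= muln1 leq_add2l.
    rewrite -sum1_card [X in (X <= _)%N]big_mkcond [X in (_ <= X)%N]big_mkcond.
    apply: leq_sum => S _; rewrite /B' !in_set.
    by case: (n_ind_edges _ _ == 1%N); case: (centre \in S); case: (tip \in S); case: (hub \in S).
  by apply: leq_sum => S; rewrite inE => /andP [SF _]; apply: card_centre_set.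
have tip_half : (#|[set S in B' | tip \in S]|).*2 = #|B'|.
  exact: card_toggle_closed toggle_tip_hubless.
have := card_centre_sets_hubless; rewrite -/B'; lia.
Qed.

Lemma Rn_sigma1_ge : (2 ^ (m - 2) <= sigma1 E)%N.
Proof. by rewrite sigma1_Rn_split (leq_trans card_pendant_sets) ?leq_addl. Qed.

Lemma Rn_S1_gt : (m.+1 * sigma1 E < 2 * S1 E)%N.
Proof.
rewrite sigma1_Rn_split S1_Rn_split.
have := sum_card_pendant_sets; have := sum_card_centre_sets.
have := card_centre_sets; have := card_pendant_sets.
have := quadratic_lt_exp2 m_gt7.
move: (2 ^ (m - 2))%N #|centre_sets| #|pendant_sets| => p b a.
move: (\sum_(S in centre_sets) #|S|)%N (\sum_(S in pendant_sets) #|S|)%N => sb sa.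
nia.
Qed.

Lemma Rn_S1_ge : (m.+2 * sigma1 E <= 2 * S1 E + 2 * m ^ 2)%N.
Proof.
rewrite sigma1_Rn_split S1_Rn_split.
have := sum_card_pendant_sets; have := sum_card_centre_sets.
have := card_centre_sets.
move: #|centre_sets| #|pendant_sets| => b a.
move: (\sum_(S in centre_sets) #|S|)%N (\sum_(S in pendant_sets) #|S|)%N => sb sa.
nia.
Qed.

End StarWithPendant.

Local Open Scope ring_scope.

Lemma av1_tree_lt n (E : {set {set 'I_n}}) : is_tree E -> (3 < n)%N -> av1 E < (n%:R + 1) / 2.
Proof.
move=> E_tree n_gt3; rewrite /av1.
have [-> | sigma_gt0] := posnP (sigma1 E).
  by rewrite invr0 mulr0; apply: divr_gt0 => //; apply: ltr_wpDl.
have bound := connected_S1_bound (tree_card_edge E_tree) (tree_connected E_tree) n_gt3.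
rewrite -(ler_nat rat) natrD !natrM -mul2n natrM -addn1 natrD in bound.
rewrite ltr_pdivrMr ?ltr0n //.
move: (sigma1 E) (S1 E) sigma_gt0 bound => t s; rewrite -(ltr_nat rat); lra.
Qed.

Lemma Mn_lt n (c : rat) :
  0 < c -> (forall E : {set {set 'I_n}}, is_tree E -> av1 E < c) -> Mn n < c.
Proof.
by move=> c_gt0 Hc; apply: (big_ind (fun x => x < c)) => // x y; rewrite gt_max => ->.
Qed.

Lemma av1_le_Mn n (E : {set {set 'I_n}}) : is_tree E -> av1 E <= Mn n.
Proof.
by move=> E_tree; rewrite /Mn (bigD1 E) //= le_max lexx.
Qed.

Lemma Mn_lt_half n : (3 < n)%N -> Mn n < (n%:R + 1) / 2.
Proof.
move=> n_gt3; apply: Mn_lt => [|E E_tree]; last exact: av1_tree_lt.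
by apply: divr_gt0 => //; apply: ltr_wpDl.
Qed.

Lemma Rn_av1_gt m : (7 < m)%N -> m.+1%:R / 2 < av1 (Rn m.+1).
Proof.
move=> m_gt7; have t_gt0 := leq_trans (expn_gt0 2 (m - 2)) (Rn_sigma1_ge m_gt7).
have := Rn_S1_gt m_gt7; rewrite -(ltr_nat rat) !natrM.
rewrite /av1 ltr_pdivlMr ?ltr0n //.
by move: (sigma1 _) (S1 _) => t s; lra.
Qed.

Lemma Rn_av1_gap m : (13 < m)%N -> (m.+1%:R + 1) / 2 - av1 (Rn m.+1) <= 1 / m%:R.
Proof.
move=> m_gt13; have m_gt7 : (7 < m)%N by lia.
have sigma_ge_cube : (m ^ 3 <= sigma1 (Rn m.+1))%N.
  exact: leq_trans (cube_le_exp2 m_gt13) (Rn_sigma1_ge m_gt7).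
have := Rn_S1_ge m_gt7; rewrite /av1.
move: (sigma1 _) (S1 _) sigma_ge_cube => t s cube_t S1_ge.
have m_gt0 : 0 < m%:R :> rat by rewrite ltr0n; lia.
have t_gt0 : 0 < t%:R :> rat by rewrite ltr0n; move: cube_t; rewrite !expnS; nia.
have gap_nat : (m * ((m + 2) * t) <= 2 * m * s + 2 * t)%N.
  have cubeE : (m * (2 * m ^ 2) = 2 * m ^ 3)%N by rewrite !expnS expn0; ring.
  rewrite addn2; apply: leq_trans (_ : m * (2 * s + 2 * m ^ 2) <= _)%N.
    by rewrite leq_mul2l S1_ge orbT.
  by rewrite mulnDr cubeE; move: cube_t; move: (m ^ 3)%N => c; nia.
rewrite -[m.+1]addn1 natrD -subr_ge0.
set M := m%:R in m_gt0 *; set T := t%:R in t_gt0 *; set Sr := s%:R.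
have gap : M * ((M + 2) * T) <= 2 * M * Sr + 2 * T.
  by rewrite -!natrD -!natrM -natrD ler_nat.
have -> : 1 / M - ((M + 1 + 1) / 2 - Sr / T) =
    (2 * M * Sr + 2 * T - M * ((M + 2) * T)) / (2 * M * T) :> rat.
  by field; rewrite !lt0r_neq0.
by rewrite divr_ge0 ?subr_ge0 // !mulr_ge0 // ltW.
Qed.

Lemma inv_nat_lt (eps : rat) : 0 < eps ->
  exists K : nat, forall m : nat, (K <= m)%N -> (0 < m)%N -> 1 / m%:R < eps.
Proof.
move=> eps_gt0; exists (Num.Def.archi_bound eps^-1) => m Km m_gt0.
have lt_m : eps^-1 < m%:R.
  by apply: lt_le_trans (archi_boundP _) _; rewrite ?ler_nat ?invr_ge0 ?ltW.
rewrite ltr_pdivrMr ?ltr0n //.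
by rewrite -(ltr_pM2l eps_gt0) mulfV ?lt0r_neq0 in lt_m.
Qed.

Lemma Rn_av1_close (eps : rat) : 0 < eps -> exists N : nat, forall n : nat, (N <= n)%N ->
  [/\ is_tree (Rn n), av1 (Rn n) < (n%:R + 1) / 2 & (n%:R + 1) / 2 - av1 (Rn n) < eps].
Proof.
move=> eps_gt0; have [K HK] := inv_nat_lt eps_gt0.
exists (K + 15)%N => -[|m] m_ge; first by lia.
have m_gt7 : (7 < m)%N by lia.
split; first exact: Rn_tree.
  by apply: av1_tree_lt; [exact: Rn_tree | lia].
by apply: le_lt_trans (Rn_av1_gap _) (HK _ _ _); lia.
Qed.

Theorem mainTheorem13 :
  (forall n : nat, (8 < n)%N ->
     0 < Mn n - n%:R / 2 < 1 / 2) /\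
  (forall eps : rat, 0 < eps -> exists N : nat, forall n : nat, (N <= n)%N ->
     `|Mn n - (n%:R + 1) / 2| < eps) /\
  (forall n : nat, (8 < n)%N ->
     is_tree (Rn n) /\ n%:R / 2 < av1 (Rn n) < (n%:R + 1) / 2) /\
  (forall eps : rat, 0 < eps -> exists N : nat, forall n : nat, (N <= n)%N ->
     `|av1 (Rn n) - (n%:R + 1) / 2| < eps).
Proof.
have Rn_bounds m : (7 < m)%N ->
    [/\ is_tree (Rn m.+1), m.+1%:R / 2 < av1 (Rn m.+1) & av1 (Rn m.+1) < (m.+1%:R + 1) / 2].
  move=> m_gt7; split; [exact: Rn_tree | exact: Rn_av1_gt |].
  by apply: av1_tree_lt; [exact: Rn_tree | lia].
split; [|split; [|split]].
- case=> [|m] // m_gt7; have [Rn_tree_m av1_gt _] := Rn_bounds m m_gt7.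
  have n_gt3 : (3 < m.+1)%N by lia.
  have Mn_ge := av1_le_Mn Rn_tree_m; have Mn_lt := Mn_lt_half n_gt3.
  by apply/andP; split; lra.
- move=> eps /Rn_av1_close [N close]; exists (N + 4)%N => n n_ge.
  have [Rn_tree_n av1_lt gap] := close n (leq_trans (leq_addr _ _) n_ge).
  have n_gt3 : (3 < n)%N by lia.
  have Mn_ge := av1_le_Mn Rn_tree_n; have Mn_lt := Mn_lt_half n_gt3.
  by rewrite ltr_norml; apply/andP; split; lra.
- by case=> [|m] // /Rn_bounds [? -> ->].
- move=> eps /Rn_av1_close [N close]; exists N => n /close [_ av1_lt gap].
  by rewrite ltr_norml; apply/andP; split; lra.
Qed.
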